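(* Let $I$ and $J$ be finitely generated graded right $A$-submodules of $Q_{\mathrm{gr}}(A)$ with structure constants $\{c_i\}_{i\in\mathbb{Z}}$ and $\{d_i\}_{i\in\mathbb{Z}}$ respectively. Then $I\cong J$ as graded right $A$-modules if and only if $c_i=d_i$ for all $i\in\mathbb{Z}$.
   Context: $\Bbbk$ is an algebraically closed field of characteristic $0$; $\sigma$ is the automorphism of $\Bbbk[z]$ (and $\Bbbk(z)$) with $\sigma(z)=z+1$. For $\alpha\in\Bbbk$, $f=z(z+\alpha)$ and $A=A(f)$ is generated by $\Bbbk[z]$, $x$, $y$ with $xz=(z+1)x$, $yz=(z-1)y$, $xy=f$, $yx=\sigma^{-1}(f)$, graded by $\deg x=1,\deg y=-1,\deg z=0$. $Q_{\mathrm{gr}}(A)$ is the graded quotient ring (localization at nonzero homogeneous elements), which equals the skew Laurent ring $\Bbbk(z)[x,x^{-1};\sigma]$ (with $xg=\sigma(g)x$ and $y=x^{-1}f$). Every finitely generated graded right $A$-submodule $I\subseteq Q_{\mathrm{gr}}(A)$ can be written $I=\bigoplus_{i\in\mathbb{Z}}\Bbbk[z]a_ix^i$ with $a_i\in\Bbbk(z)$ nonzero; then $c_i:=a_ia_{i+1}^{-1}$, normalized to be monic, is a polynomial in $\{1,\sigma^i(z),\sigma^i(z+\alpha),\sigma^i(f)\}$. The sequence $\{c_i\}$ is called the structure constants of $I$ (it does not depend on the choice of generators $a_i$). *)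

From HB Require Import structures.
From mathcomp Require Import all_boot all_order all_algebra fraction.
Set Implicit Arguments. Unset Strict Implicit. Unset Printing Implicit Defensive.
Import Order.TTheory GRing.Theory.
Local Open Scope ring_scope.

Notation "x %:F" := (@FracField.tofrac _ x) .
Notation ratf K := {fraction {poly K}}.

Definition shiftp (K : fieldType) (i : int) (p : {poly K}) : {poly K} :=
  p \Po ('X + (i%:~R)%:P).

Definition fpol (K : fieldType) (alpha : K) : {poly K} := 'X * ('X + alpha%:P).

(* A homogeneous element of Q_gr(A) = k(z)[x,x^-1;sigma] of degree i is
   g x^i with g in k(z); we represent it by the pair (i, g).
   Right actions of the generators of A on g x^i :
     (g x^i) . p = (g sigma^i(p)) x^i            (p in k[z])
     (g x^i) . x = g x^(i+1)
     (g x^i) . y = g x^i x^-1 f = (g sigma^(i-1)(f)) x^(i-1).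
   A graded subset of Q_gr(A) is given by its homogeneous components
   I i : pred (ratf K)  (I_i = { g | g x^i in I }). *)

Definition gr_submodule (K : fieldType) (alpha : K)
    (I : int -> ratf K -> Prop) : Prop :=
  forall i : int,
    I i 0 /\
    (forall g h, I i g -> I i h -> I i (g + h)) /\
    (forall g (p : {poly K}), I i g -> I i (g * (shiftp i p)%:F)) /\
    (forall g, I i g -> I (i + 1) g) /\
    (forall g, I i g -> I (i - 1) (g * (shiftp (i - 1) (fpol alpha))%:F)).

Inductive gen_by (K : fieldType) (alpha : K) (gens : seq (int * ratf K))
    : int -> ratf K -> Prop :=
  | gen_base i g : (i, g) \in gens -> gen_by alpha gens i g
  | gen_zero i : gen_by alpha gens i 0
  | gen_add i g h : gen_by alpha gens i g -> gen_by alpha gens i h ->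
      gen_by alpha gens i (g + h)
  | gen_mulp i g (p : {poly K}) : gen_by alpha gens i g ->
      gen_by alpha gens i (g * (shiftp i p)%:F)
  | gen_mulx i g : gen_by alpha gens i g -> gen_by alpha gens (i + 1) g
  | gen_muly i g : gen_by alpha gens i g ->
      gen_by alpha gens (i - 1) (g * (shiftp (i - 1) (fpol alpha))%:F).

Definition fg_gr_submodule (K : fieldType) (alpha : K)
    (I : int -> ratf K -> Prop) : Prop :=
  gr_submodule alpha I /\
  exists gens : seq (int * ratf K),
    forall i g, I i g <-> gen_by alpha gens i g.

Definition structure_constants (K : fieldType)
    (I : int -> ratf K -> Prop) (c : int -> {poly K}) : Prop :=
  exists a : int -> ratf K,
    (forall i, a i != 0) /\
    (forall i g, I i g <-> exists p : {poly K}, g = p%:F * a i) /\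
    (forall i, c i \is monic /\
       exists lam : K, lam != 0 /\ (c i)%:F = (lam%:P)%:F * (a i / a (i + 1))).

Definition gr_iso (K : fieldType) (alpha : K)
    (I J : int -> ratf K -> Prop) : Prop :=
  exists phi : int -> ratf K -> ratf K,
    forall i : int,
      (forall g, I i g -> J i (phi i g)) /\
      (forall g h, I i g -> I i h -> phi i (g + h) = phi i g + phi i h) /\
      (forall g (p : {poly K}), I i g ->
          phi i (g * (shiftp i p)%:F) = phi i g * (shiftp i p)%:F) /\
      (forall g, I i g -> phi (i + 1) g = phi i g) /\
      (forall g, I i g ->
          phi (i - 1) (g * (shiftp (i - 1) (fpol alpha))%:F)
          = phi i g * (shiftp (i - 1) (fpol alpha))%:F) /\
      (forall g h, I i g -> I i h -> phi i g = phi i h -> g = h) /\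
      (forall h, J i h -> exists2 g, I i g & phi i g = h).

From HB Require Import structures.
From mathcomp Require Import all_boot all_order all_algebra fraction.
Import GRing.Theory.
Local Open Scope ring_scope.

(* Write I_i = k[z] a_i, J_i = k[z] b_i and r_i = b_i / a_i.  In each degree a
   graded isomorphism is a k[z]-linear bijection k[z] a_i -> k[z] b_i, so it
   sends a_i to a nonzero constant times b_i; compatibility with x, applied to
   a_i = p a_(i+1) in I_(i+1), then makes r_(i+1) a nonzero constant multiple
   of r_i.  Conversely, if every r_i is a constant multiple of r_0, right
   multiplication by r_0 is a graded isomorphism.  Finally c_i and d_i are
   monic and proportional to a_i / a_(i+1) and b_i / b_(i+1), so c_i = d_i
   exactly when the quotient of these, r_(i+1) / r_i, is a nonzero constant. *)

Set Implicit Arguments.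
Unset Strict Implicit.
Unset Printing Implicit Defensive.

Section ScalarAssociates.
Variable K : fieldType.

Definition fconst (k : K) : ratf K := (k%:P)%:F.

Lemma fconst1 : fconst 1 = 1.
Proof. by rewrite /fconst rmorph1. Qed.

Lemma fconstM k l : fconst (k * l) = fconst k * fconst l.
Proof. by rewrite /fconst polyCM rmorphM. Qed.

Lemma fconst_eq0 k : (fconst k == 0) = (k == 0).
Proof. by rewrite /fconst tofrac_eq0 polyC_eq0. Qed.

Lemma fconstV k : fconst k^-1 = (fconst k)^-1.
Proof.
have [->|k0] := eqVneq k 0; first by rewrite invr0 /fconst polyC0 rmorph0 invr0.
apply: (@mulIf _ (fconst k)); first by rewrite fconst_eq0.
by rewrite -fconstM !mulVf ?fconst1 ?fconst_eq0.
Qed.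

Definition scalar_assoc (u v : ratf K) := exists k : K, k != 0 /\ u = fconst k * v.

Lemma scalar_assoc_refl u : scalar_assoc u u.
Proof. by exists 1; rewrite fconst1 mul1r oner_neq0. Qed.

Lemma scalar_assoc_sym u v : scalar_assoc u v -> scalar_assoc v u.
Proof.
move=> [k [k0 ->]]; exists k^-1.
by rewrite invr_eq0 k0 fconstV mulKf ?fconst_eq0.
Qed.

Lemma scalar_assoc_trans v u w :
  scalar_assoc u v -> scalar_assoc v w -> scalar_assoc u w.
Proof.
by move=> [k [k0 ->]] [l [l0 ->]]; exists (k * l); rewrite mulf_neq0 // fconstM mulrA.
Qed.

Lemma scalar_assocMr w u v :
  w != 0 -> scalar_assoc (u * w) (v * w) <-> scalar_assoc u v.
Proof.
move=> w0; split=> -[k [k0 E]]; exists k; split=> //; last by rewrite E mulrA.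
by apply: (mulIf w0); rewrite E mulrA.
Qed.

Lemma scalar_assoc_quotients (u0 u1 v0 v1 : ratf K) :
  u0 != 0 -> u1 != 0 -> v1 != 0 ->
  scalar_assoc (u0 / u1) (v0 / v1) <-> scalar_assoc (v1 / u1) (v0 / u0).
Proof.
move=> u00 u10 v10.
have -> : v1 / u1 = u0 / u1 * (v1 / u0) by rewrite [RHS]mulrC mulrA (divfK u00).
have -> : v0 / u0 = v0 / v1 * (v1 / u0) by rewrite mulrA (divfK v10).
have w0 : v1 / u0 != 0 by apply: mulf_neq0 v10 _; rewrite invr_eq0; exact: u00.
exact: iff_sym (scalar_assocMr _ _ w0).
Qed.

Lemma monic_scalar_assoc_eq (c d : {poly K}) :
  c \is monic -> d \is monic -> scalar_assoc c%:F d%:F -> c = d.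
Proof.
move=> /monicP c1 /monicP d1 [k [_ E]].
have cE : c = k *: d.
  by apply/eqP; rewrite -tofrac_eq -mul_polyC tofracM; apply/eqP; exact: E.
by move: c1; rewrite cE lead_coefZ d1 mulr1 => ->; rewrite scale1r.
Qed.

Lemma monic_eq_scalar_assoc (c d : {poly K}) u v :
  c \is monic -> d \is monic -> scalar_assoc c%:F u -> scalar_assoc d%:F v ->
  c = d <-> scalar_assoc u v.
Proof.
move=> cm dm cu dv; split=> [cd | uv].
  by apply: scalar_assoc_trans (scalar_assoc_sym cu) _; rewrite cd.
apply: monic_scalar_assoc_eq => //.
exact: scalar_assoc_trans cu (scalar_assoc_trans uv (scalar_assoc_sym dv)).
Qed.

Lemma scalar_assoc_chain (r : int -> ratf K) :
  (forall i, scalar_assoc (r (i + 1)) (r i)) -> forall i, scalar_assoc (r i) (r 0).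
Proof.
move=> step; elim/int_ind => [|n IHn|n IHn]; first exact: scalar_assoc_refl.
  by rewrite -addn1 PoszD; apply: scalar_assoc_trans (step n) IHn.
apply: scalar_assoc_trans IHn; apply: scalar_assoc_sym.
by have := step (- n.+1%:Z); rewrite -addn1 PoszD opprD addrNK.
Qed.

(* Writing f a = p b, surjectivity gives q p b = b, so p is a unit of k[z]. *)
Lemma poly_linear_bij_scalar (a b : ratf K) (f : ratf K -> ratf K) :
  b != 0 -> (forall p : {poly K}, f (p%:F * a) = p%:F * f a) ->
  (exists p : {poly K}, f a = p%:F * b) ->
  (exists p : {poly K}, f (p%:F * a) = b) ->
  scalar_assoc (f a) b.
Proof.
move=> b0 fM [p fa] [q fqa].
have qp1 : q * p = 1.
  apply/eqP; rewrite -tofrac_eq tofrac1 tofracM; apply/eqP.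
  by apply: (mulIf b0); rewrite -mulrA -fa -fM fqa mul1r.
have : p \is a GRing.unit by apply/unitrPr; exists q; rewrite mulrC.
rewrite poly_unitE => /andP [/size_poly1P [k k0 pk] _].
by exists k; rewrite fa pk.
Qed.

Lemma shiftpK (i : int) (p : {poly K}) : shiftp i (shiftp (- i) p) = p.
Proof.
rewrite /shiftp -[(i%:~R)%:P]opprK -polyCN -intrN.
exact: comp_polyXaddC_K.
Qed.

Lemma shiftp_morph_mulpl (i : int) (S : ratf K -> Prop) (f : ratf K -> ratf K) :
  (forall g p, S g -> f (g * (shiftp i p)%:F) = f g * (shiftp i p)%:F) ->
  forall g (p : {poly K}), S g -> f (p%:F * g) = p%:F * f g.
Proof. by move=> fM g p Sg; rewrite mulrC -(shiftpK i p) fM // mulrC. Qed.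

Lemma basis_mem (I : int -> ratf K -> Prop) (a : int -> ratf K) :
  (forall i g, I i g <-> exists p : {poly K}, g = p%:F * a i) -> forall i, I i (a i).
Proof. by move=> HaI i; apply/HaI; exists 1; rewrite tofrac1 mul1r. Qed.

End ScalarAssociates.

Section GradedBases.
Variables (K : fieldType) (alpha : K) (I J : int -> ratf K -> Prop).
Variables (a b : int -> ratf K).
Hypotheses (a0 : forall i, a i != 0) (b0 : forall i, b i != 0).
Hypothesis aI : forall i g, I i g <-> exists p : {poly K}, g = p%:F * a i.
Hypothesis bJ : forall i g, J i g <-> exists p : {poly K}, g = p%:F * b i.

Local Notation ratio i := (b i / a i).

Lemma eq_structure_constantsP (c d : {poly K}) i :
  c \is monic /\ scalar_assoc c%:F (a i / a (i + 1)) ->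
  d \is monic /\ scalar_assoc d%:F (b i / b (i + 1)) ->
  c = d <-> scalar_assoc (ratio (i + 1)) (ratio i).
Proof.
move=> [cm ca] [dm db]; apply: iff_trans (monic_eq_scalar_assoc cm dm ca db) _.
exact: scalar_assoc_quotients (a0 i) (a0 (i + 1)) (b0 (i + 1)).
Qed.

Lemma gr_iso_ratio_step :
  (forall i g, I i g -> I (i + 1) g) -> gr_iso alpha I J ->
  forall i, scalar_assoc (ratio (i + 1)) (ratio i).
Proof.
move=> Ix [phi iso].
have phi_mulpl j g p : I j g -> phi j (p%:F * g) = p%:F * phi j g.
  by have [_ [_ [phiM _]]] := iso j; exact: shiftp_morph_mulpl phiM g p.
have phi_basis j : scalar_assoc (phi j (a j)) (b j).
  have [toJ [_ [_ [_ [_ [_ onto]]]]]] := iso j.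
  apply: poly_linear_bij_scalar (b0 j) _ _ _ => [p||].
  - exact: phi_mulpl (basis_mem aI j).
  - exact/bJ/toJ/(basis_mem aI j).
  - by have [g /aI [p ->] <-] := onto _ (basis_mem bJ j); exists p.
move=> i; have [p ai] := (aI (i + 1) (a i)).1 (Ix _ _ (basis_mem aI i)).
have p0 : p%:F != 0.
  by apply: contraNneq (a0 i) => p0; rewrite ai p0 mul0r; exact: eqxx.
have shift_ai : phi (i + 1) (a i) = phi i (a i).
  by have [_ [_ [_ [phiX _]]]] := iso i; exact: phiX (basis_mem aI i).
have bi : scalar_assoc (p%:F * b (i + 1)) (b i).
  apply: scalar_assoc_trans (phi_basis i).
  rewrite -shift_ai ai (phi_mulpl _ _ _ (basis_mem aI (i + 1))) ![p%:F * _]mulrC.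
  exact/(scalar_assocMr _ _ p0)/scalar_assoc_sym/phi_basis.
have -> : ratio (i + 1) = p%:F * b (i + 1) / a i.
  by rewrite ai invfM mulrACA (divff p0) mul1r.
by apply/scalar_assocMr; [rewrite invr_eq0; exact: a0 | exact: bi].
Qed.

Lemma ratio_gr_iso :
  (forall i, scalar_assoc (ratio i) (ratio 0)) -> gr_iso alpha I J.
Proof.
move=> assoc0; have r0 : ratio 0 != 0 := mulf_neq0 (b0 0) (invr_neq0 (a0 0)).
exists (fun _ g => g * ratio 0) => i.
have [k [k0 ri]] := assoc0 i.
have fk0 : fconst k != 0 by rewrite fconst_eq0.
have bi : b i = fconst k * (a i * ratio 0).
  by rewrite mulrCA -ri mulrC (divfK (a0 i)).
split.
  move=> _ /aI [p ->]; apply/bJ; exists (p * k^-1%:P).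
  by rewrite bi tofracM -/(fconst _) fconstV -[RHS]mulrA (mulKf fk0) [RHS]mulrA.
split; first by move=> g h _ _; rewrite mulrDl.
split; first by move=> g p _; rewrite mulrAC.
split; first by [].
split; first by move=> g _; rewrite mulrAC.
split; first by move=> g h _ _ /(mulIf r0).
move=> _ /bJ [p ->]; exists ((p * k%:P)%:F * a i); first by apply/aI; exists (p * k%:P).
by rewrite bi tofracM -/(fconst k) -!mulrA.
Qed.

End GradedBases.

Theorem lemma3p4 (K : closedFieldType) (Hchar : [pchar K] =i pred0) (alpha : K)
    (I J : int -> ratf K -> Prop) (c d : int -> {poly K}) :
  fg_gr_submodule alpha I -> fg_gr_submodule alpha J ->
  structure_constants I c -> structure_constants J d ->
  (gr_iso alpha I J <-> forall i : int, c i = d i).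
Proof.
move=> [HI _] _ [a [a0 [aI Hc]]] [b [b0 [bJ Hd]]].
have Ix i g : I i g -> I (i + 1) g by have [_ [_ [_ [Ix _]]]] := HI i; exact: Ix.
have cd_ratio i := eq_structure_constantsP a0 b0 (Hc i) (Hd i).
split=> [iso i | cd].
  exact/cd_ratio/(gr_iso_ratio_step a0 b0 aI bJ Ix iso).
apply: (ratio_gr_iso alpha a0 b0 aI bJ).
by apply: (scalar_assoc_chain (r := fun i => b i / a i)) => i; apply/cd_ratio.
Qed.
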